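(* Let $A$ be a unital C$^*$-algebra with the QTS property. Assume that $A$ has a unique tracial state and that this tracial state is faithful. Then $A$ is simple.
   Context: A unital C$^*$-algebra $A$ has the QTS property if for every proper closed two-sided ideal $J$ of $A$, the quotient $A/J$ admits a tracial state. *)

From HB Require Import structures.
From mathcomp Require Import all_boot all_order all_algebra.
From mathcomp Require Import complex.
From mathcomp Require Import all_classical all_reals all_analysis.
Set Implicit Arguments. Unset Strict Implicit. Unset Printing Implicit Defensive.
Import Order.TTheory GRing.Theory Num.Theory.
Import numFieldNormedType.Exports.
Local Open Scope ring_scope.
Local Open Scope complex_scope.
Local Open Scope classical_set_scope.

(** Hierarchy-Builder does not allow
    joining the ring hierarchy with the normed-module hierarchy here, so the
    unital algebra structure, the involution and all the C*-axioms are given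
    as an explicit record [cstar_alg A] on top of the Banach space: an
    associative unital C-bilinear multiplication with submultiplicative norm,
    a conjugate-linear anti-multiplicative involution, and the C*-identity
    ||x^* x|| = ||x||^2. *)
Record cstar_alg (R : realType) (A : completeNormedModType R[i]) := CStarAlg {
  cmul : A -> A -> A;
  cone : A;
  cstar : A -> A;
  cmulA : forall x y z, cmul x (cmul y z) = cmul (cmul x y) z;
  cmul1x : forall x, cmul cone x = x;
  cmulx1 : forall x, cmul x cone = x;
  cmulDl : forall x y z, cmul (x + y) z = cmul x z + cmul y z;
  cmulDr : forall x y z, cmul x (y + z) = cmul x y + cmul x z;
  cmulZl : forall (c : R[i]) x y, cmul (c *: x) y = c *: cmul x y;
  cmulZr : forall (c : R[i]) x y, cmul x (c *: y) = c *: cmul x y;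
  cnormM : forall x y, `|cmul x y| <= `|x| * `|y|;
  cstarK : forall x, cstar (cstar x) = x;
  cstarD : forall x y, cstar (x + y) = cstar x + cstar y;
  cstarZ : forall (c : R[i]) x, cstar (c *: x) = (c^*)%C *: cstar x;
  cstarM : forall x y, cstar (cmul x y) = cmul (cstar y) (cstar x);
  cstar_identity : forall x, `|cmul (cstar x) x| = `|x| ^+ 2
}.

Section Defs.
Variables (R : realType) (A : completeNormedModType R[i]) (S : cstar_alg A).

Local Notation mul := (cmul S).
Local Notation star := (cstar S).

Definition lin_functional (tau : A -> R[i]) : Prop :=
  forall (c : R[i]) (x y : A), tau (c *: x + y) = (c * tau x + tau y)%R.

(** A state on the unital C*-algebra A: a positive linear functional with
    tau 1 = 1 (for unital C*-algebras this is equivalent to: positive linear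
    functional of norm one; boundedness is automatic).  Positivity:
    tau(x^* x) >= 0 in the partial order of C, i.e. a nonnegative real. *)
Definition is_state (tau : A -> R[i]) : Prop :=
  [/\ lin_functional tau,
      (forall x : A, 0 <= tau (mul (star x) x))%R &
      tau (cone S) = 1%R].

Definition is_tracial_state (tau : A -> R[i]) : Prop :=
  is_state tau /\ forall x y : A, tau (mul x y) = tau (mul y x).

Definition faithful_functional (tau : A -> R[i]) : Prop :=
  forall x : A, tau (mul (star x) x) = 0%R -> x = 0%R.

Definition closed_ideal (J : set A) : Prop :=
  [/\ J 0%R,
      (forall x y, J x -> J y -> J (x - y)%R),
      (forall a x, J x -> J (mul a x)),
      (forall a x, J x -> J (mul x a)) &
      closed J].

Definition proper_ideal (J : set A) : Prop := J != setT.

(** A tracial state on the quotient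
    C*-algebra A/J is exactly a tracial state on A that vanishes on J
    (compose with the quotient map q : A -> A/J, which is a surjective unital
    *-homomorphism with q(x)^* q(x) = q(x^* x)). *)
Definition quotient_has_tracial_state (J : set A) : Prop :=
  exists tau : A -> R[i], is_tracial_state tau /\ forall x, J x -> tau x = 0%R.

Definition QTS : Prop :=
  forall J : set A, closed_ideal J -> proper_ideal J ->
    quotient_has_tracial_state J.

Definition simple_cstar : Prop :=
  forall J : set A, closed_ideal J -> J = [set 0%R] \/ J = setT.

End Defs.

From Pilot Require Import Defs.
From HB Require Import structures.
From mathcomp Require Import all_boot all_order all_algebra.
From mathcomp Require Import complex.
From mathcomp Require Import all_classical all_reals all_analysis.
Local Open Scope ring_scope.
Local Open Scope classical_set_scope.

(* A proper closed ideal J carries a tracial state vanishing on it (QTS); by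
   uniqueness this is the faithful trace tau.  For x in J, also x^* x lies in
   J, so tau (x^* x) = 0 and faithfulness gives x = 0.  Hence J = 0. *)

Section FaithfulVanishing.
Variables (R : realType) (A : completeNormedModType R[i]) (S : cstar_alg A).

Lemma faithful_vanishing_left_ideal_eq0 (tau : A -> R[i]) (J : set A) :
  faithful_functional S tau -> J 0 ->
  (forall a x, J x -> J (cmul S a x)) ->
  (forall x, J x -> tau x = 0) ->
  J = [set 0].
Proof.
move=> faithful_tau J0 J_mull tauJ0; apply/seteqP; split=> x /=; last by move->.
by move=> Jx; apply: faithful_tau; apply: tauJ0; apply: J_mull.
Qed.

End FaithfulVanishing.

Theorem theorem2p2 (R : realType) (A : completeNormedModType R[i])
    (S : cstar_alg A) :
  QTS S ->
  (exists tau : A -> R[i], is_tracial_state S tau /\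
     (forall sigma : A -> R[i], is_tracial_state S sigma -> sigma = tau) /\
     faithful_functional S tau) ->
  simple_cstar S.
Proof.
move=> qts [tau [_ [tau_unique faithful_tau]]] J J_ideal.
have [->|J_ne] := pselect (J = setT); first by right.
have J_proper : Defs.proper_ideal J by rewrite /Defs.proper_ideal; case: eqP.
have [sigma [sigma_trace sigmaJ0]] := qts J J_ideal J_proper.
rewrite (tau_unique sigma sigma_trace) in sigmaJ0.
case: J_ideal => J0 _ J_mull _ _.
by left; exact: faithful_vanishing_left_ideal_eq0 faithful_tau J0 J_mull sigmaJ0.
Qed.
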